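(* Let $G$ be a finite undirected weighted graph on $V=\{1,\dots,n\}$ with symmetric nonnegative weights $w(ij)=w(ji)\ge0$, degrees $d_i=\sum_j w(ij)$, $\mathrm{vol}(V)=\sum_i d_i>0$, and positive vertex measure $\mu_1,\dots,\mu_n>0$. For $x\in\mathbb R^n$ put $$\langle x,\mathcal M(x)\rangle_\mu=\frac12\sum_{i,j=1}^n\Big(\frac{d_id_j}{\mathrm{vol}(V)}-w(ij)\Big)|x_i-x_j|,$$ and for $x\neq0$ let $r^*_{\mathcal M}(x)=\langle x,\mathcal M(x)\rangle_\mu/\|x\|_\infty$, and $\lambda_1(r^*_{\mathcal M})=\max_{x\ne0}r^*_{\mathcal M}(x)$. Then for every $A\subseteq V$, $r^*_{\mathcal M}(\mathbb 1_A-\mathbb 1_{\overline A})=q(A)\,\mu(V)$, and $$q(G)=\max_{A\subseteq V}q(A)=\lambda_1(r^*_{\mathcal M})/\mu(V).$$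
   Context: $\|x\|_\infty=\max_i|x_i|$; $\mathbb 1_A$ is the indicator vector of $A$, $\overline A=V\setminus A$, $\mu(A)=\sum_{i\in A}\mu_i$, $\mathrm{vol}(A)=\sum_{i\in A}d_i$. Modularity: $Q(A)=\sum_{i,j\in A}w(ij)-\mathrm{vol}(A)^2/\mathrm{vol}(V)$, and $q(A)=\frac{2}{\mu(V)}Q(A)$. The quantity $\langle x,\mathcal M(x)\rangle_\mu$ is the paper's notation for the pairing with the nonlinear modularity operator; here it is simply defined by the displayed formula. *)

From HB Require Import structures.
From mathcomp Require Import all_boot all_order all_algebra.
Set Implicit Arguments. Unset Strict Implicit. Unset Printing Implicit Defensive.
Import Order.TTheory GRing.Theory Num.Theory.
Local Open Scope ring_scope.

Section Modularity.
Variables (R : realFieldType) (n : nat).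
Variables (w : 'I_n -> 'I_n -> R) (mu : 'I_n -> R).

Definition deg (i : 'I_n) : R := \sum_j w i j.
Definition vol (A : {set 'I_n}) : R := \sum_(i in A) deg i.
Definition volV : R := \sum_i deg i.
Definition meas (A : {set 'I_n}) : R := \sum_(i in A) mu i.
Definition muV : R := \sum_i mu i.

Definition Qmod (A : {set 'I_n}) : R :=
  \sum_(i in A) \sum_(j in A) w i j - vol A ^+ 2 / volV.
Definition qmod (A : {set 'I_n}) : R := 2 / muV * Qmod A.

(* q(G) = max_{A subset V} q(A); the seed 0 is harmless since q(set0) = 0 *)
Definition qgraph : R := \big[Num.max/0]_(A : {set 'I_n}) qmod A.

Definition infnorm (x : 'rV[R]_n) : R := \big[Num.max/0]_i `|x ord0 i|.

Definition pairM (x : 'rV[R]_n) : R :=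
  2^-1 * \sum_i \sum_j (deg i * deg j / volV - w i j) * `|x ord0 i - x ord0 j|.

Definition rstarM (x : 'rV[R]_n) : R := pairM x / infnorm x.

Definition sgnvec (A : {set 'I_n}) : 'rV[R]_n :=
  \row_i (if i \in A then 1 else -1).

Definition is_lambda1 (l : R) : Prop :=
  (exists2 x : 'rV[R]_n, x != 0 & rstarM x = l) /\
  (forall x : 'rV[R]_n, x != 0 -> rstarM x <= l).
End Modularity.

From mathcomp Require Import all_boot all_order all_algebra.
From mathcomp Require Import ring lra.
Set Implicit Arguments. Unset Strict Implicit. Unset Printing Implicit Defensive.
Import Order.TTheory GRing.Theory Num.Theory.
Local Open Scope ring_scope.

(* The modularity matrix B_ij = d_i d_j / vol(V) - w(ij) has vanishing row and
   column sums, so the B-weight of the pairs separated by A is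
   -2 sum_(i,j in A) B_ij = 2 Q(A).  Since |1_A - 1_Abar| only takes the values
   0 and 2 on pairs, this gives r*(1_A - 1_Abar) = 2 Q(A) = q(A) mu(V).
   Conversely, a discrete coarea formula writes sum_ij B_ij |x_i - x_j| as a
   combination of cut weights of lower level sets of x, with nonnegative
   coefficients summing to max x - min x <= 2 ||x||: raise the lowest level of
   x to the next one and induct on the number of entries above the lowest
   level.  Each cut weight is at most 2 max_A Q(A), hence
   r*(x) <= q(G) mu(V), with equality at an optimal sign vector. *)

Section CutFunctional.
Variables (R : realDomainType) (n : nat) (c : 'I_n -> 'I_n -> R).

Definition cut_weight (S : {set 'I_n}) : R :=
  \sum_i \sum_j c i j * ((i \in S) != (j \in S))%:R.

Definition total_variation (x : 'rV[R]_n) : R :=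
  \sum_i \sum_j c i j * `|x ord0 i - x ord0 j|.

Lemma cut_weight0 : cut_weight set0 = 0.
Proof.
by rewrite /cut_weight big1 // => i _; rewrite big1 // => j _; rewrite !inE mulr0.
Qed.

Lemma total_variation_const (x : 'rV[R]_n) a :
  (forall i, x ord0 i = a) -> total_variation x = 0.
Proof.
move=> xa; rewrite /total_variation big1 // => i _; rewrite big1 // => j _.
by rewrite !xa subrr normr0 mulr0.
Qed.

Lemma total_variation_decomp (x y : 'rV[R]_n) d (S : {set 'I_n}) :
  (forall i j, `|x ord0 i - x ord0 j|
     = `|y ord0 i - y ord0 j| + d * ((i \in S) != (j \in S))%:R) ->
  total_variation x = total_variation y + d * cut_weight S.
Proof.
move=> xy; rewrite /total_variation /cut_weight mulr_sumr -big_split /=.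
apply: eq_bigr => i _; rewrite mulr_sumr -big_split /=.
by apply: eq_bigr => j _; rewrite xy; ring.
Qed.

Lemma dist_raise_bottom (a m u v : R) : a <= m -> a <= u -> a <= v ->
  (u <= a) || (m <= u) -> (v <= a) || (m <= v) ->
  `|u - v| = `|(if u <= a then m else u) - (if v <= a then m else v)|
             + (m - a) * ((u <= a) != (v <= a))%:R.
Proof.
move=> am au av; case: (leP u a) => ua; case: (leP v a) => va /=;
  rewrite ?mulr1n ?mulr1 ?mulr0 ?addr0 // => u_gap v_gap.
- by rewrite (_ : u = v) ?subrr //; lra.
- by rewrite !ler0_norm; lra.
- by rewrite !ger0_norm; lra.
Qed.

Lemma total_variation_le_cut K a b (x : 'rV[R]_n) :
  (forall S, cut_weight S <= K) -> a <= b -> (forall i, a <= x ord0 i <= b) ->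
  total_variation x <= (b - a) * K.
Proof.
move=> leK; have K_ge0 : 0 <= K by rewrite -cut_weight0 leK.
move: {2}#|_|.+1 (ltnSn #|[set i | a < x ord0 i]|) => k.
elim: k a x => // k IH a x lt_k le_ab x_ab.
have [above0|[j0 j0_above]] := set_0Vmem [set i | a < x ord0 i].
  rewrite (@total_variation_const _ a) ?mulr_ge0 ?subr_ge0 // => i.
  apply/eqP; rewrite eq_le; case/andP: (x_ab i) => -> _; rewrite andbT leNgt.
  by apply/negP => ai; have := in_set0 i; rewrite -above0 inE ai.
pose jm := [arg min_(j < j0 | a < x ord0 j) x ord0 j]%O; pose m := x ord0 jm.
have [am m_min] : a < m /\ forall j, a < x ord0 j -> m <= x ord0 j.
  by rewrite inE in j0_above; rewrite /m /jm; case: arg_minP.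
pose y : 'rV[R]_n := \row_i (if x ord0 i <= a then m else x ord0 i).
have x_ge i : a <= x ord0 i by case/andP: (x_ab i).
have x_gap i : (x ord0 i <= a) || (m <= x ord0 i).
  by case: (leP (x ord0 i) a) => //= /m_min.
have -> : total_variation x
          = total_variation y + (m - a) * cut_weight [set i | x ord0 i <= a].
  apply: total_variation_decomp => i j; rewrite !mxE !inE.
  by apply: dist_raise_bottom; rewrite ?x_ge ?x_gap ?ltW.
have y_mb i : m <= y ord0 i <= b.
  rewrite mxE; case: (leP (x ord0 i) a) => [_|/m_min ->].
    by rewrite lexx; case/andP: (x_ab jm).
  by case/andP: (x_ab i).
have lt_y_k : (#|[set i | (m < y ord0 i)%R]| < k)%N.
  suff sub : [set i | m < y ord0 i] \subset [set i | a < x ord0 i] :\ jm.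
    apply: leq_ltn_trans (subset_leq_card sub) _.
    by move: lt_k; rewrite (cardsD1 jm) inE am.
  apply/subsetP => i; rewrite !inE mxE.
  case: (leP (x ord0 i) a) => _; first by rewrite ltxx.
  by rewrite andbT => mi; apply/eqP => eq_ijm; rewrite eq_ijm /m ltxx in mi.
have le_mb : m <= b by case/andP: (x_ab jm).
have -> : (b - a) * K = (b - m) * K + (m - a) * K by ring.
apply: lerD; first exact: IH.
by apply: ler_wpM2l; rewrite ?leK // subr_ge0 ltW.
Qed.

Lemma cut_weight_zero_margins (S : {set 'I_n}) :
  (forall i, \sum_j c i j = 0) -> (forall j, \sum_i c i j = 0) ->
  cut_weight S = - 2 * \sum_(i in S) \sum_(j in S) c i j.
Proof.
move=> row0 col0.
have sep (u v : bool) : (u != v)%:R = u%:R + v%:R - 2 * (u%:R * v%:R) :> R.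
  by case: u; case: v; rewrite /= ?mulr1n ?mulr0n; ring.
have -> : \sum_(i in S) \sum_(j in S) c i j
          = \sum_i \sum_j c i j * ((i \in S)%:R * (j \in S)%:R).
  rewrite big_mkcond; apply: eq_bigr => i _; rewrite big_mkcond /=.
  case: (i \in S); last by rewrite big1 // => j _; rewrite mul0r mulr0.
  by apply: eq_bigr => j _; case: (j \in S); rewrite /= ?mulr1n ?mulr1 ?mulr0.
have rowS : \sum_i \sum_j c i j * (i \in S)%:R = 0.
  by rewrite big1 // => i _; rewrite -mulr_suml row0 mul0r.
have colS : \sum_i \sum_j c i j * (j \in S)%:R = 0.
  by rewrite exchange_big big1 // => j _; rewrite -mulr_suml col0 mul0r.
transitivity (\sum_i \sum_j c i j * (i \in S)%:R
  + \sum_i \sum_j c i j * (j \in S)%:R - 2 * \sum_i \sum_j c i j * ((i \in S)%:R * (j \in S)%:R)); last first.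
  by rewrite rowS colS add0r sub0r mulNr.
rewrite mulr_sumr -!big_split -sumrB.
apply: eq_bigr => i _; rewrite mulr_sumr -!big_split -sumrB.
by apply: eq_bigr => j _ /=; rewrite sep; ring.
Qed.

End CutFunctional.

Section ModularityMatrix.
Variables (R : realFieldType) (n : nat) (w : 'I_n -> 'I_n -> R).
Hypothesis w_sym : forall i j, w i j = w j i.
Hypothesis volV_gt0 : 0 < volV w.

Definition modularity_matrix i j : R := deg w i * deg w j / volV w - w i j.

Lemma modularity_matrix_row0 i : \sum_j modularity_matrix i j = 0.
Proof.
rewrite /modularity_matrix sumrB -mulr_suml -mulr_sumr -/(volV w).
by rewrite mulfK ?gt_eqF // subrr.
Qed.

Lemma modularity_matrix_col0 j : \sum_i modularity_matrix i j = 0.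
Proof.
rewrite /modularity_matrix sumrB -!mulr_suml -/(volV w) mulrAC mulfV ?gt_eqF //.
by rewrite mul1r /deg; under [X in _ - X]eq_bigr do rewrite w_sym; rewrite subrr.
Qed.

Lemma cut_weight_modularity_matrix S :
  cut_weight modularity_matrix S = 2 * Qmod w S.
Proof.
rewrite (cut_weight_zero_margins _ modularity_matrix_row0 modularity_matrix_col0).
rewrite mulNr -mulrN /Qmod; congr (2 * _).
under eq_bigr do rewrite sumrB; rewrite sumrB opprB; congr (_ - _).
rewrite expr2 /vol mulr_suml mulr_suml; apply: eq_bigr => i _.
by rewrite mulr_sumr mulr_suml.
Qed.

Lemma pairM_total_variation x :
  pairM w x = 2^-1 * total_variation modularity_matrix x.
Proof. by []. Qed.

End ModularityMatrix.

Section SignVectors.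
Variables (R : realFieldType) (n : nat).

Lemma total_variation_sgnvec (c : 'I_n -> 'I_n -> R) (A : {set 'I_n}) :
  total_variation c (sgnvec R A) = 2 * cut_weight c A.
Proof.
rewrite /total_variation /cut_weight mulr_sumr; apply: eq_bigr => i _.
rewrite mulr_sumr; apply: eq_bigr => j _; rewrite !mxE.
case: (i \in A); case: (j \in A); rewrite /= ?subrr ?normr0 ?mulr0 //.
- by rewrite opprK ger0_norm; lra.
- by rewrite ler0_norm; lra.
Qed.

Lemma normr_le_infnorm (x : 'rV[R]_n) i : `|x ord0 i| <= infnorm x.
Proof. exact: le_bigmax. Qed.

Lemma infnorm_gt0 (x : 'rV[R]_n) : x != 0 -> 0 < infnorm x.
Proof.
rewrite ltNge; apply: contra => x_le0; apply/eqP/rowP => i; apply/eqP.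
by rewrite mxE -normr_le0 (le_trans (normr_le_infnorm x i)).
Qed.

Lemma infnorm_sgnvec (A : {set 'I_n}) : (0 < n)%N -> infnorm (sgnvec R A) = 1.
Proof.
move=> n_gt0; apply/le_anti/andP; split.
  apply: bigmax_le => // i _.
  by rewrite mxE; case: (i \in A); rewrite ?normrN normr1.
have := normr_le_infnorm (sgnvec R A) (Ordinal n_gt0).
by rewrite mxE; case: (_ \in A); rewrite ?normrN normr1.
Qed.

Lemma sgnvec_neq0 (A : {set 'I_n}) : (0 < n)%N -> sgnvec R A != 0.
Proof.
move=> n_gt0; apply/eqP => /rowP /(_ (Ordinal n_gt0)) /eqP.
by rewrite !mxE; case: (_ \in A); rewrite ?oppr_eq0 oner_eq0.
Qed.

End SignVectors.

Section ModularityRatio.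
Variables (R : realFieldType) (n : nat) (w : 'I_n -> 'I_n -> R) (mu : 'I_n -> R).
Hypothesis w_sym : forall i j, w i j = w j i.
Hypothesis volV_gt0 : 0 < volV w.
Hypothesis mu_gt0 : forall i, 0 < mu i.

Lemma dim_gt0 : (0 < n)%N.
Proof.
by move: volV_gt0; case: n w => [|m] w'; rewrite /volV ?big_ord0 ?ltxx.
Qed.

Lemma muV_gt0 : 0 < muV mu.
Proof.
rewrite /muV (bigD1 (Ordinal dim_gt0)) //= ltr_pwDl ?mu_gt0 //.
by apply: sumr_ge0 => i _; apply: ltW.
Qed.

Lemma qmod_muV A : qmod w mu A * muV mu = 2 * Qmod w A.
Proof. by rewrite /qmod mulrAC divfK ?gt_eqF ?muV_gt0. Qed.

Lemma qmod_set0 : qmod w mu set0 = 0.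
Proof. by rewrite /qmod /Qmod /vol !big_set0 expr0n mul0r subrr mulr0. Qed.

Lemma qmod_le_qgraph A : qmod w mu A <= qgraph w mu.
Proof. exact: le_bigmax. Qed.

Lemma qgraph_attained : exists A, qgraph w mu = qmod w mu A.
Proof.
apply: (big_ind (fun q => exists A, q = qmod w mu A)).
- by exists set0; rewrite qmod_set0.
- move=> _ _ [A ->] [B ->].
  by case: (leP (qmod w mu A) (qmod w mu B)); [exists B | exists A].
- by move=> A _; exists A.
Qed.

Lemma rstarM_sgnvec A : rstarM w (sgnvec R A) = qmod w mu A * muV mu.
Proof.
rewrite /rstarM infnorm_sgnvec ?dim_gt0 // divr1 pairM_total_variation.
rewrite total_variation_sgnvec cut_weight_modularity_matrix // qmod_muV.
by rewrite mulKf ?pnatr_eq0.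
Qed.

Lemma rstarM_le_qgraph x : x != 0 -> rstarM w x <= qgraph w mu * muV mu.
Proof.
move=> x_neq0; have x_gt0 := infnorm_gt0 x_neq0.
rewrite /rstarM ler_pdivrMr // pairM_total_variation.
have cut_le S : cut_weight (modularity_matrix w) S <= qgraph w mu * muV mu.
  rewrite cut_weight_modularity_matrix // -qmod_muV.
  by rewrite ler_pM2r ?muV_gt0 ?qmod_le_qgraph.
have x_bounds i : - infnorm x <= x ord0 i <= infnorm x.
  by rewrite -ler_norml normr_le_infnorm.
have x_range : - infnorm x <= infnorm x by lra.
have := total_variation_le_cut cut_le x_range x_bounds.
lra.
Qed.

End ModularityRatio.

Theorem theorem3p7 (R : realFieldType) (n : nat)
  (w : 'I_n -> 'I_n -> R) (mu : 'I_n -> R)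
  (w_sym : forall i j, w i j = w j i)
  (w_ge0 : forall i j, 0 <= w i j)
  (vol_pos : 0 < volV w)
  (mu_pos : forall i, 0 < mu i) :
  (forall A : {set 'I_n}, rstarM w (sgnvec R A) = qmod w mu A * muV mu) /\
  (exists l : R, is_lambda1 w l /\ qgraph w mu = l / muV mu).
Proof.
have muV_neq0 : muV mu != 0 by rewrite gt_eqF ?(muV_gt0 vol_pos mu_pos).
split=> [A|]; first exact: rstarM_sgnvec.
have [A qgraphE] := qgraph_attained w mu.
exists (qgraph w mu * muV mu); split; last by rewrite mulfK.
split; last exact: rstarM_le_qgraph.
exists (sgnvec R A); first exact/sgnvec_neq0/(dim_gt0 vol_pos).
by rewrite qgraphE (rstarM_sgnvec w_sym vol_pos mu_pos).
Qed.
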